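(* Let $\mathcal{G}=(I,E)$ be a finite, simple, undirected, connected graph, let $Q\in\mathbb{R}_+^{I\times I}$ with $Q_{ij}>0$ if $\{i,j\}\in E$ and $Q_{ij}=0$ otherwise, and let $\mathbf{q}\in\mathbb{R}_+^I$ be not identically zero. Let $\mathcal{M}_\mathcal{G}=(\vec E,\Phi)$ be the message digraph of $\mathcal{G}$ and define $\boldsymbol{\alpha}\in\mathbb{R}_+^{\vec E}$ by $\alpha_{hk}=q_k/Q_{kh}$ for every $hk\in\vec E$. Then, for every $ji\in\vec E$ belonging to a non-trivial strongly connected component of $\mathcal{M}_\mathcal{G}$, there exists $hk\in\vec E$ reachable from $ji$ in $\mathcal{M}_\mathcal{G}$ such that $\alpha_{hk}>0$.
   Context: The message digraph $\mathcal{M}_\mathcal{G}=(\vec E,\Phi)$ has node set $\vec E=\{ji:=(j,i):\{i,j\}\in E\}$ (ordered pairs of adjacent vertices) and arc set $\Phi=\{(ji,hk): \{i,j\},\{k,h\}\in E,\ i=h,\ j\neq k\}$, i.e. there is an arc from $ji$ to $ik$ whenever $\{i,j\},\{i,k\}\in E$ and $k\neq j$. In a digraph, $w$ is reachable from $v$ if there is a directed path (possibly of length $0$) from $v$ to $w$; a strongly connected component is a maximal induced subdigraph in which all nodes are mutually reachable, and it is non-trivial unless it consists of a single node without a self-loop. *)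

From HB Require Import structures.
From mathcomp Require Import all_boot all_order all_algebra.
Set Implicit Arguments. Unset Strict Implicit. Unset Printing Implicit Defensive.
Import Order.TTheory GRing.Theory Num.Theory.

Definition simple_graph (I : finType) (E : rel I) : Prop :=
  irreflexive E /\ symmetric E.

Definition graph_connected (I : finType) (E : rel I) : Prop :=
  forall i j : I, connect E i j.

(* Nodes of the message digraph: ordered pairs ji = (j, i) with {i,j} in E.
   The pair p = (j, i) is stored as p.1 = j, p.2 = i. *)
Definition msg_node (I : finType) (E : rel I) :=
  {p : I * I | E p.1 p.2}.

(* Arc (ji, hk) iff i = h and j != k  (with {k,h} in E automatic since
   hk is a node). *)
Definition msg_arc (I : finType) (E : rel I) : rel (msg_node E) :=
  fun u v => ((val u).2 == (val v).1) && ((val u).1 != (val v).2).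

Definition msg_reach (I : finType) (E : rel I) : rel (msg_node E) :=
  connect (@msg_arc I E).

Definition msg_scc (I : finType) (E : rel I) (x : msg_node E) :
  {set msg_node E} :=
  [set y | msg_reach x y && msg_reach y x].

Definition in_nontrivial_scc (I : finType) (E : rel I) (x : msg_node E) :
  bool := (1 < #|msg_scc x|)%N || msg_arc x x.

Definition msg_alpha (R : realFieldType) (I : finType) (E : rel I)
  (Q : I -> I -> R) (q : I -> R) (u : msg_node E) : R :=
  q (val u).2 / Q (val u).2 (val u).1.

From HB Require Import structures.
From mathcomp Require Import all_boot all_order all_algebra.
Set Implicit Arguments. Unset Strict Implicit. Unset Printing Implicit Defensive.
Import Order.TTheory GRing.Theory Num.Theory.
Local Open Scope ring_scope.

(* A node x of a non-trivial strongly connected component lies on a cycle, so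
   every message reachable from x has a predecessor that is reachable from x.
   This makes the set of heads of messages reachable from x closed under
   adjacency: from a message j -> a and an edge {a, b}, either j != b and
   a -> b follows it, or j = b and a predecessor of j -> a has head b.
   By connectivity every vertex, in particular one with q > 0, is such a
   head, and at a message h -> k with q_k > 0 we get alpha_{hk} > 0. *)

Lemma connect_last_arc (T : finType) (e : rel T) (x y : T) :
  connect e x y -> x != y -> exists2 z, connect e x z & e z y.
Proof.
move=> /connectP [p xp ->]; case/lastP: p xp => [|p z] /=; first by rewrite eqxx.
rewrite rcons_path last_rcons => /andP [xp pz] _.
by exists (last x p) => //; apply/connectP; exists p.
Qed.

Section MessageDigraph.

Variables (I : finType) (E : rel I).

Local Notation msg := (msg_node E).
Local Notation arc := (@msg_arc I E).
Local Notation msg_head u := (val u).2.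
Local Notation msg_tail u := (val u).1.

Definition msg_of (a b : I) (ab : E a b) : msg := exist _ (a, b) ab.

Lemma nontrivial_scc_on_cycle (x : msg) :
  in_nontrivial_scc x -> exists2 z, msg_reach x z & arc z x.
Proof.
case/orP=> [|xx]; last by exists x; first exact: connect0.
case/card_gt1P=> [a [b [sa sb ab]]].
have [y] : exists2 y, y \in msg_scc x & y != x.
  by case: (eqVneq a x) => [ax | ?]; [exists b; rewrite // -ax eq_sym | exists a].
rewrite inE => /andP [xy yx] yNx.
have [z yz zx] := connect_last_arc yx yNx.
by exists z => //; exact: connect_trans xy yz.
Qed.

Lemma reachable_has_reachable_pred (x : msg) :
  in_nontrivial_scc x ->
  forall y, msg_reach x y -> exists2 t, msg_reach x t & arc t y.
Proof.
move=> /nontrivial_scc_on_cycle cyc y xy.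
by case: (eqVneq x y) => [<- // | ?]; exact: connect_last_arc.
Qed.

Definition reachable_heads (x : msg) : pred I :=
  [pred w | [exists y, msg_reach x y && (msg_head y == w)]].

Lemma reachable_heads_step (x : msg) (a b : I) :
  in_nontrivial_scc x -> E a b ->
  a \in reachable_heads x -> b \in reachable_heads x.
Proof.
move=> xS ab /existsP [y /andP [xy /eqP ya]]; apply/existsP.
case: (eqVneq (msg_tail y) b) => [yb | yNb].
  have [t xt /andP [/eqP ty _]] := reachable_has_reachable_pred xS xy.
  by exists t; rewrite xt ty yb eqxx.
exists (msg_of ab); rewrite eqxx andbT.
by apply: connect_trans xy (connect1 _); rewrite /msg_arc /= ya eqxx yNb.
Qed.

Lemma reachable_heads_all (x : msg) :
  symmetric E -> graph_connected E -> in_nontrivial_scc x ->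
  forall w, w \in reachable_heads x.
Proof.
move=> Esym Econn xS w.
have closedE : closed E (reachable_heads x).
  move=> a b ab; apply/idP/idP; apply: reachable_heads_step => //.
  by rewrite Esym.
have xhead : msg_head x \in reachable_heads x.
  by apply/existsP; exists x; rewrite /msg_reach connect0 eqxx.
by rewrite -(closed_connect closedE (Econn (msg_head x) w)).
Qed.

Lemma msg_alpha_gt0 (R : realFieldType) (Q : I -> I -> R) (q : I -> R) (u : msg) :
  symmetric E -> (forall i j, E i j -> 0 < Q i j) -> 0 < q (msg_head u) ->
  0 < msg_alpha Q q u.
Proof.
move=> Esym Qgt qu; rewrite /msg_alpha divr_gt0 // Qgt // Esym.
exact: valP u.
Qed.

End MessageDigraph.

Theorem lemma5 (R : realFieldType) (I : finType) (E : rel I)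
  (Q : I -> I -> R) (q : I -> R) :
  simple_graph E ->
  graph_connected E ->
  (forall i j : I, 0 <= Q i j) ->
  (forall i j : I, E i j -> 0 < Q i j) ->
  (forall i j : I, ~~ E i j -> Q i j = 0) ->
  (forall i : I, 0 <= q i) ->
  (exists i : I, q i != 0) ->
  forall ji : msg_node E, in_nontrivial_scc ji ->
    exists hk : msg_node E, msg_reach ji hk /\ 0 < msg_alpha Q q hk.
Proof.
move=> [_ Esym] Econn _ Qgt _ qge [v qv] ji jiS.
have /existsP [hk /andP [jihk /eqP hkv]] := reachable_heads_all Esym Econn jiS v.
exists hk; split => //; apply: msg_alpha_gt0 => //.
by rewrite hkv lt_def qv qge.
Qed.
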